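(* Let $n,k,r$ be integers with $k,r\geq 2$ and $n\geq k+r$, and let $H$ be a vertex-$k$-maximal $r$-uniform hypergraph on $n$ vertices with a separation triple $(S,H_1,H_2)$. Let $e$ be an $r$-subset of $V(H_1)$ or of $V(H_2)$ with $e\notin E(H)$. Then every subhypergraph $H'$ of $H+e$ with $\kappa(H')\geq k+1$ satisfies $V(H')\subseteq V(H_1)$ or $V(H')\subseteq V(H_2)$; i.e. $H'$ is a subhypergraph of $H_1+e$ or of $H_2+e$ (where $H_i+e$ is $H_i$ with $e$ added whenever $e\subseteq V(H_i)$). Moreover, if for some $i\in\{1,2\}$ we have $e\subseteq V(H_i)$ and $e\not\subseteq S$, then $H'$ is a subhypergraph of $H_i+e$.
   Context: A hypergraph $H=(V,E)$ consists of a finite vertex set $V$ and a set $E$ of non-empty subsets of $V$ (edges). $H$ is $r$-uniform if every edge has exactly $r$ elements. The complement $H^c$ of an $r$-uniform hypergraph $H=(V,E)$ is the $r$-uniform hypergraph on $V$ whose edges are the $r$-subsets of $V$ not in $E$. A subhypergraph of $H$ is $H'=(V',E')$ with $V'\subseteq V$, $E'\subseteq E$. For an $r$-subset $e\in E(H^c)$, $H+e=(V,E\cup\{e\})$. For $Y\subseteq V$, $H[Y]$ is the induced hypergraph with vertex set $Y$ and edges $\{e\in E: e\subseteq Y\}$, and $H-Y=H[V\setminus Y]$. A path is an alternating sequence $v_1,e_1,\dots,e_s,v_{s+1}$ of distinct vertices and distinct edges with $v_i,v_{i+1}\in e_i$; connectedness and components are defined via paths. A vertex-cut is a set $X\subseteq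 V$ with $H-X$ disconnected. The vertex-connectivity $\kappa(H)$ is the minimum size of a vertex-cut if one exists, and $|V(H)|-1$ otherwise. $\overline{\kappa}(H)=\max\{\kappa(H'): H'\text{ a subhypergraph of }H\}$. An $r$-uniform hypergraph $H$ is vertex-$k$-maximal if $\overline{\kappa}(H)\leq k$ but $\overline{\kappa}(H+e)\geq k+1$ for every $e\in E(H^c)$. For a vertex-$k$-maximal $r$-uniform $H$ with $|V(H)|\geq k+r$ (so $\kappa(H)=k$ and $H$ has vertex-cuts), a separation triple $(S,H_1,H_2)$ is obtained by taking a minimum vertex-cut $S$ (so $|S|=k$), a component $C_1$ of $H-S$, letting $C_2=H-(S\cup V(C_1))$, $H_1=H[S\cup V(C_1)]$ and $H_2=H[S\cup V(C_2)]$. *)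

From Stdlib Require Import ClassicalEpsilon.
From mathcomp Require Import all_boot.
Set Implicit Arguments. Unset Strict Implicit. Unset Printing Implicit Defensive.

Definition pb (P : Prop) : bool := if excluded_middle_informative P then true else false.

Record hypergraph (T : finType) := Hyp { hV : {set T}; hE : {set {set T}} }.

Section Hyper.
Variable T : finType.
Implicit Types (H : hypergraph T) (X Y e : {set T}).

Definition wf H : bool :=
  [forall e in hE H, (e != set0) && (e \subset hV H)].

Definition uniform (r : nat) H : bool := [forall e in hE H, #|e| == r].

Definition subhyp (H' H : hypergraph T) : bool :=
  [&& wf H', hV H' \subset hV H & hE H' \subset hE H].

Definition induced H Y : hypergraph T := Hyp Y [set e in hE H | e \subset Y].
Definition delv H Y : hypergraph T := induced H (hV H :\: Y).
Definition addE H e : hypergraph T := Hyp (hV H) (e |: hE H).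

Definition hpath H (x y : T) : Prop :=
  exists (vs : seq T) (es : seq {set T}),
    size vs = (size es).+1 /\ uniq vs /\ uniq es /\
    {subset vs <= hV H} /\ {subset es <= hE H} /\
    head x vs = x /\ last x vs = y /\
    (forall i, i < size es ->
          (nth x vs i \in nth set0 es i) && (nth x vs i.+1 \in nth set0 es i)).

Definition connected H : Prop := forall x y, x \in hV H -> y \in hV H -> hpath H x y.

Definition vertex_cut H X : bool := (X \subset hV H) && ~~ pb (connected (delv H X)).

Definition kappa H : nat :=
  if [exists X, vertex_cut H X]
  then \big[minn/#|hV H|]_(X | vertex_cut H X) #|X|
  else (#|hV H|).-1.

Definition kbar H : nat :=
  \max_(p : {set T} * {set {set T}} | subhyp (Hyp p.1 p.2) H) kappa (Hyp p.1 p.2).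

Definition vertex_k_maximal (k r : nat) H : Prop :=
  kbar H <= k /\
  forall e, e \subset hV H -> #|e| = r -> e \notin hE H -> k.+1 <= kbar (addE H e).

Definition comp_set H S (x : T) : {set T} :=
  [set y | pb (hpath (delv H S) x y)].

Definition sep_triple H S (H1 H2 : hypergraph T) : Prop :=
  vertex_cut H S /\ #|S| = kappa H /\
  exists x, x \in hV H :\: S /\
    H1 = induced H (S :|: comp_set H S x) /\
    H2 = induced H (S :|: (hV H :\: (S :|: comp_set H S x))).

Definition addE_if H e : hypergraph T := if e \subset hV H then addE H e else H.

End Hyper.

(* Since kbar(H) <= k, a subhypergraph H' of H + e with kappa(H') > k must
   contain the new edge e.  If H' had vertices on both sides C1 and C2 of S
   in H, then S ∩ V(H') would separate them in H': an edge of H' avoiding S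
   is either an edge of H - S, which stays inside one component, or e, which
   lies on one side of S.  This cut has at most |S| <= k vertices, contradicting
   kappa(H') > k.  If moreover e has a vertex outside S, that vertex fixes the
   side containing V(H'). *)
From Stdlib Require Import ClassicalEpsilon.
From mathcomp Require Import all_boot.
Set Implicit Arguments. Unset Strict Implicit. Unset Printing Implicit Defensive.

Lemma pbP (P : Prop) : reflect P (pb P).
Proof. by rewrite /pb; case: excluded_middle_informative => h; constructor. Qed.

Lemma bigmin_leq (I : eqType) (s : seq I) (P : pred I) (F : I -> nat) i0 y :
  y \in s -> P y -> \big[minn/i0]_(i <- s | P i) F i <= F y.
Proof.
elim: s => //= a s IH; rewrite in_cons big_cons => /orP [/eqP <- ->|ys Py].
  exact: geq_minl.
by case: (P a); rewrite ?geq_min IH ?orbT.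
Qed.

Section Hypergraphs.
Variable T : finType.
Implicit Types (G H : hypergraph T) (S e f : {set T}) (x y z : T).

Definition hwalk G x y (vs : seq T) (es : seq {set T}) : Prop :=
  size vs = (size es).+1 /\ uniq vs /\ uniq es /\
  {subset vs <= hV G} /\ {subset es <= hE G} /\
  head x vs = x /\ last x vs = y /\
  (forall i, i < size es ->
     (nth x vs i \in nth set0 es i) && (nth x vs i.+1 \in nth set0 es i)).

Lemma hwalk_hpath G x y vs es : hwalk G x y vs es -> hpath G x y.
Proof. by exists vs, es. Qed.

Lemma hwalk_prefix G x y vs es j :
  hwalk G x y vs es -> j < size vs ->
  hwalk G x (nth x vs j) (take j.+1 vs) (take j es).
Proof.
move=> [sz [uv [ue [sv [se [hh [_ adj]]]]]]] jlt.
have jle : j <= size es by rewrite -ltnS -sz.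
rewrite /hwalk !size_takel //; do 2!split => //; first exact: take_uniq.
split; first exact: take_uniq.
split; first by move=> v /mem_take /sv.
split; first by move=> v /mem_take /se.
split; first by rewrite -hh; case: (vs) sz.
split; first by rewrite -nth_last size_takel //= nth_take.
move=> i ilt; rewrite !nth_take ?(ltnW ilt) //; last by rewrite ltnS ltnW.
exact/adj/(leq_trans ilt).
Qed.

Lemma hwalk_rcons G x y vs es f z :
  hwalk G x y vs es -> f \in hE G -> y \in f -> z \in f -> z \in hV G ->
  z \notin vs -> f \notin es -> hwalk G x z (rcons vs z) (rcons es f).
Proof.
move=> [sz [uv [ue [sv [se [hh [hl adj]]]]]]] fE yf zf zV zvs fes.
rewrite /hwalk !size_rcons sz !rcons_uniq zvs fes uv ue last_rcons.
do 3!split => //.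
split; first by move=> v; rewrite mem_rcons inE => /predU1P [->|/sv].
split; first by move=> v; rewrite mem_rcons inE => /predU1P [->|/se].
split; first by rewrite -hh; case: (vs) sz.
split => // i; rewrite ltnS leq_eqVlt => /predU1P [->|ilt].
  rewrite !nth_rcons sz ltnSn !eqxx !ltnn zf andbT.
  by rewrite -[size es]/((size es).+1.-1) -sz nth_last hl.
by rewrite !nth_rcons sz !ltnS ilt (ltnW ilt) adj.
Qed.

Lemma hpath_edge G x y z f :
  hpath G x y -> f \in hE G -> y \in f -> z \in f -> z \in hV G -> hpath G x z.
Proof.
move=> [vs [es walk]] fE yf zf zV.
have [sz [_ [ue [_ [_ [_ [_ adj]]]]]]] := walk.
have [zvs|zvs] := boolP (z \in vs).
  by rewrite -(nth_index x zvs); apply/hwalk_hpath/(hwalk_prefix walk);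
    rewrite index_mem.
have [fes|fes] := boolP (f \in es).
  2: exact: hwalk_hpath (hwalk_rcons walk fE yf zf zV zvs fes).
(* Cut the walk just before its use of f and leave through f to z. *)
have jlt : index f es < size es by rewrite index_mem.
have /andP [vjf _] := adj _ jlt; rewrite nth_index // in vjf.
have jvs : index f es < size vs by rewrite sz ltnW.
apply: hwalk_hpath (hwalk_rcons (hwalk_prefix walk jvs) fE vjf zf zV _ _).
- by apply: contra zvs => /mem_take.
- by rewrite in_take // ltnn.
Qed.

Lemma hpath_closed G (A : {set T}) x y :
  (forall f v, f \in hE G -> v \in f -> v \in A -> f \subset A) ->
  x \in A -> hpath G x y -> y \in A.
Proof.
move=> closedA xA [vs [es [sz [_ [_ [_ [se [hh [hl adj]]]]]]]]].
suff vsA i : i <= size es -> nth x vs i \in A.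
  by rewrite -hl -nth_last sz; apply: vsA.
elim: i => [_|i IH ilt]; first by rewrite nth0 hh.
have /andP [vi vi1] := adj i ilt.
apply: subsetP vi1; apply: closedA vi (IH (ltnW ilt)).
by apply: se; rewrite mem_nth.
Qed.

Lemma hpath_mem_last G x y : hpath G x y -> y \in hV G.
Proof.
by case=> [[|v vs] [es [//= _ [_ [_ [sv [_ [_ [<- _]]]]]]]]]; apply/sv/mem_last.
Qed.

Lemma kappa_le_cut G X : vertex_cut G X -> kappa G <= #|X|.
Proof.
move=> cutX; rewrite /kappa.
have -> : [exists X, vertex_cut G X] by apply/existsP; exists X.
exact: bigmin_leq (mem_index_enum X) cutX.
Qed.

Lemma kappa_le_kbar G H : subhyp G H -> kappa G <= kbar H.
Proof. by case: G => V E subG; apply: (leq_bigmax_cond (V, E)). Qed.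

Lemma wf_edge_sub G f : wf G -> f \in hE G -> f \subset hV G.
Proof. by move=> /forallP /(_ f) /implyP hf /hf /andP []. Qed.

Lemma new_edge_of_kappa_gt_kbar G H e :
  subhyp G (addE H e) -> kbar H < kappa G -> e \in hE G.
Proof.
case/and3P=> wfG sV sE; apply: contraTT => eG; rewrite -leqNgt.
apply/kappa_le_kbar/and3P; split=> //; apply/subsetP => f fG.
move/subsetP: sE => /(_ f fG); rewrite /= in_setU1 => /predU1P [fe|//].
by rewrite -fe fG in eG.
Qed.

Lemma subhyp_addE_if_induced G H e (Y : {set T}) :
  wf G -> e \in hE G -> hV G \subset Y -> hE G \subset e |: hE H ->
  subhyp G (addE_if (induced H Y) e).
Proof.
move=> wfG eG sY sE; have eY := subset_trans (wf_edge_sub wfG eG) sY.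
rewrite /addE_if /= eY /subhyp wfG sY; apply/subsetP => f fG.
move/subsetP: sE => /(_ f fG); rewrite !inE => /predU1P [->|fH].
  by rewrite eqxx.
by rewrite fH (subset_trans (wf_edge_sub wfG fG) sY) orbT.
Qed.


Lemma comp_set_sub H S x : comp_set H S x \subset hV H :\: S.
Proof. by apply/subsetP => y; rewrite inE => /pbP /hpath_mem_last. Qed.

Lemma comp_set_edge H S x f v :
  f \in hE H -> f \subset hV H :\: S -> v \in f -> v \in comp_set H S x ->
  f \subset comp_set H S x.
Proof.
move=> fH fS vf /[!inE] /pbP xv; apply/subsetP => z zf; rewrite inE.
apply/pbP/(hpath_edge xv _ vf zf); first by rewrite inE fH.
exact: subsetP zf.
Qed.

Section Separation.
Variables (H G : hypergraph T) (S e : {set T}) (x : T).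
Local Notation C := (comp_set H S x).
Hypothesis sub_V : hV G \subset hV H.
Hypothesis sub_E : hE G \subset e |: hE H.
Hypothesis e_side : (e \subset S :|: C) || (e \subset S :|: (hV H :\: (S :|: C))).

Lemma delv_edge_sub_comp f v :
  f \in hE (delv G (S :&: hV G)) -> v \in f -> v \in C -> f \subset C.
Proof.
rewrite inE => /andP [fG fV] vf vC.
have fS : f \subset hV H :\: S.
  apply/subsetP => z /(subsetP fV); rewrite !inE => /andP [zS zG].
  by rewrite zG andbT in zS; rewrite zS (subsetP sub_V).
have [fH|fH] := boolP (f \in hE H); first exact: comp_set_edge vf vC.
have fe : f = e.
  by apply/eqP; move/subsetP: sub_E => /(_ f fG); rewrite in_setU1 (negbTE fH) orbF.
(* e avoids S, so it lies wholly inside C or wholly outside it. *)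
rewrite fe in fS vf *; case/orP: e_side => /subsetP eY; apply/subsetP => z ze.
- by move: (eY z ze) (subsetP fS z ze); rewrite !inE => /orP [->|].
- move: (eY v vf) (subsetP fS v vf).
  by rewrite !(in_setU, in_setD) vC orbT /= orbF => ->.
Qed.

Lemma meet_both_sides_cut w u :
  w \in hV G :&: C -> u \in hV G :\: (S :|: C) -> vertex_cut G (S :&: hV G).
Proof.
rewrite in_setI in_setD in_setU negb_or => /andP [wG wC] /andP [/andP [uS uC] uG].
rewrite /vertex_cut subsetIr; apply/negP => /pbP conn.
suff : u \in C by rewrite (negbTE uC).
have /setDP [_ wS] := subsetP (comp_set_sub H S x) w wC.
apply: hpath_closed delv_edge_sub_comp wC (conn w u _ _).
  by rewrite /= !inE wG (negbTE wS).
by rewrite /= !inE uG (negbTE uS).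
Qed.

Lemma sub_side_of_kappa_gt :
  #|S| < kappa G ->
  (hV G \subset S :|: C) || (hV G \subset S :|: (hV H :\: (S :|: C))).
Proof.
move=> kG; apply/negPn/norP => [[/subsetPn [u uG uSC] /subsetPn [w wG]]].
rewrite !(in_setU, in_setD) (subsetP sub_V w wG) andbT negb_or negbK.
case/andP=> wS; rewrite (negbTE wS) /= => wC.
have cut : vertex_cut G (S :&: hV G).
  apply: (meet_both_sides_cut (w := w) (u := u)).
    by rewrite in_setI wG wC.
  by rewrite in_setD uG uSC.
have := leq_trans (kappa_le_cut cut) (subset_leq_card (subsetIl S (hV G))).
by rewrite leqNgt kG.
Qed.

End Separation.

Lemma setU_sides_meet (S C V : {set T}) :
  (S :|: C) :&: (S :|: (V :\: (S :|: C))) \subset S.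
Proof. by apply/subsetP => v; rewrite !inE; case: (v \in S); case: (v \in C). Qed.

Lemma sub_side_of_edge (A e S Y1 Y2 : {set T}) :
  Y1 :&: Y2 \subset S -> e \subset A -> e \subset Y1 -> ~~ (e \subset S) ->
  (A \subset Y1) || (A \subset Y2) -> A \subset Y1.
Proof.
move=> Y12 eA eY1 /subsetPn [v ve vS] /orP [//|AY2]; case/negP: vS.
by apply/(subsetP Y12); rewrite inE (subsetP eY1) ?(subsetP AY2) ?(subsetP eA).
Qed.

End Hypergraphs.

Theorem lemma2p2 (T : finType) (n k r : nat) (H H1 H2 : hypergraph T)
    (S e : {set T}) :
  2 <= k -> 2 <= r -> k + r <= n ->
  wf H -> uniform r H -> #|hV H| = n ->
  vertex_k_maximal k r H ->
  sep_triple H S H1 H2 ->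
  #|e| = r -> (e \subset hV H1) || (e \subset hV H2) -> e \notin hE H ->
  forall H' : hypergraph T, subhyp H' (addE H e) -> k.+1 <= kappa H' ->
    ((hV H' \subset hV H1) || (hV H' \subset hV H2)) /\
    (subhyp H' (addE_if H1 e) || subhyp H' (addE_if H2 e)) /\
    ((e \subset hV H1) -> ~~ (e \subset S) -> subhyp H' (addE_if H1 e)) /\
    ((e \subset hV H2) -> ~~ (e \subset S) -> subhyp H' (addE_if H2 e)).
Proof.
move=> _ _ _ wfH _ _ [kbarH _] [_ [cardS [x [_ [-> ->]]]]] _ e_side _.
move=> H' subH' kH' /=.
rewrite /= in e_side; set C := comp_set H S x in e_side *.
have kbarH' : kbar H < kappa H' := leq_ltn_trans kbarH kH'.
have eH' := new_edge_of_kappa_gt_kbar subH' kbarH'.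
have S_lt : #|S| < kappa H'.
  by rewrite cardS (leq_ltn_trans _ kbarH') // kappa_le_kbar // /subhyp wfH !subxx.
case/and3P: subH' => wfH' sV sE; rewrite /= in sV sE.
have side := sub_side_of_kappa_gt sV sE e_side S_lt.
have sub_if (Y : {set T}) : hV H' \subset Y -> subhyp H' (addE_if (induced H Y) e).
  by move=> sY; apply: subhyp_addE_if_induced.
have eV := wf_edge_sub wfH' eH'.
have meet := setU_sides_meet S C (hV H).
split=> //; split; first by case/orP: side => /sub_if ->; rewrite ?orbT.
split=> eY eS; apply: sub_if.
- exact: sub_side_of_edge meet eV eY eS side.
- by rewrite orbC in side; apply: sub_side_of_edge eV eY eS side; rewrite setIC.
Qed.
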